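(* Let $r\ge0$ and let $Q_i,P_i\in\mathfrak{gl}_m$, $i=0,\dots,r$, be canonical coordinates with Poisson brackets $\{P_i\overset{\otimes}{,}Q_j\}=\delta_{ij}\Pi$, $\{P_i\overset{\otimes}{,}P_j\}=\{Q_i\overset{\otimes}{,}Q_j\}=0$. Define $A_k=\sum_{i=0}^{r-k}Q_iP_{i+k}$ for $k=0,\dots,r$. Then $$\{A_k\overset{\otimes}{,}A_l\}=\begin{cases}-[\Pi,A_{k+l}\otimes\mathbb I],&k+l\le r,\\0,&k+l>r.\end{cases}$$
   Context: $\{X\overset{\otimes}{,}Y\}=\sum_{a,b,c,d}\{X_{ab},Y_{cd}\}E_{ab}\otimes E_{cd}$, $\Pi=\sum_{a,b}E_{ab}\otimes E_{ba}$ (permutation operator). The resulting bracket is the standard Lie–Poisson bracket on the dual of the Takiff algebra $\mathfrak{gl}_m[z]/z^{r+1}$, for elements $\sum_kA_kz^{-k-1}$. *)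

From HB Require Import structures.
From mathcomp Require Import all_boot all_order all_algebra.
Set Implicit Arguments. Unset Strict Implicit. Unset Printing Implicit Defensive.
Import GRing.Theory.
Local Open Scope ring_scope.

Definition poisson_bracket (K : fieldType) (R : comAlgType K)
  (br : R -> R -> R) : Prop :=
  [/\ forall x y z, br (x + y) z = br x z + br y z,
      forall (c : K) x y, br (c *: x) y = c *: br x y,
      forall x y, br x y = - br y x,
      forall x y z, br (x * y) z = x * br y z + br x z * y
    & forall x y z, br x (br y z) + br y (br z x) + br z (br x y) = 0].

(* Elements of gl_m (x) gl_m with coefficients in R:
   T a b c d is the coefficient of E_ab (x) E_cd. *)
Definition tensor (R : Type) (m : nat) := 'I_m -> 'I_m -> 'I_m -> 'I_m -> R.

(* {X (x), Y} = sum {X_ab, Y_cd} E_ab (x) E_cd *)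
Definition tbr (R : Type) (m : nat) (br : R -> R -> R) (X Y : 'M[R]_m)
  : tensor R m := fun a b c d => br (X a b) (Y c d).

Definition Pi (R : pzRingType) (m : nat) : tensor R m :=
  fun a b c d => ((a == d) && (b == c))%:R.

Definition tens (R : pzRingType) (m : nat) (X Y : 'M[R]_m) : tensor R m :=
  fun a b c d => X a b * Y c d.

(* product in gl_m (x) gl_m: (X(x)Y)(Z(x)W) = XZ (x) YW *)
Definition tmul (R : pzRingType) (m : nat) (S T : tensor R m) : tensor R m :=
  fun a b c d => \sum_(e < m) \sum_(f < m) S a e c f * T e b f d.

Definition tadd (R : pzRingType) (m : nat) (S T : tensor R m) : tensor R m :=
  fun a b c d => S a b c d + T a b c d.
Definition topp (R : pzRingType) (m : nat) (S : tensor R m) : tensor R m :=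
  fun a b c d => - S a b c d.
Definition tzero (R : pzRingType) (m : nat) : tensor R m := fun _ _ _ _ => 0.

Definition tcomm (R : pzRingType) (m : nat) (S T : tensor R m) : tensor R m :=
  tadd (tmul S T) (topp (tmul T S)).

Definition Aop (R : pzRingType) (m r : nat) (Q P : nat -> 'M[R]_m) (k : nat)
  : 'M[R]_m := \sum_(i < (r - k).+1) Q i *m P (i + k)%N.

(** Expanding [A_k] and [A_l] entrywise, the bracket of two summands
    [Q_i P_(i+k)] and [Q_j P_(j+l)] reduces, by the Leibniz rule and the
    vanishing of [{Q,Q}] and [{P,P}], to the two canonical brackets
    [{P_(i+k), Q_j}] and [{P_(j+l), Q_i}], so only the pairs [j = i + k] and
    [i = j + l] survive.  Contracting the sums along these diagonals leaves
    [Q_i P_(i+k+l)] summed over [i <= r - k - l], i.e. [A_(k+l)] (an empty sum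
    when [k + l > r]), with the index pattern
    [δ_bc (A_(k+l))_ad - δ_ad (A_(k+l))_cb]: the entry of [-[Π, A_(k+l) ⊗ 1]]. *)

From HB Require Import structures.
From mathcomp Require Import all_boot all_order all_algebra.
From mathcomp Require Import ring zify.
From Stdlib Require Import FunctionalExtensionality.
Set Implicit Arguments. Unset Strict Implicit.
Import GRing.Theory.
Local Open Scope ring_scope.

Lemma tensorP (R : Type) m (S T : tensor R m) :
  (forall a b c d, S a b c d = T a b c d) -> S = T.
Proof.
move=> eqST; apply: functional_extensionality => a.
apply: functional_extensionality => b; apply: functional_extensionality => c.
apply: functional_extensionality => d; exact: eqST.
Qed.

Section PoissonBracket.
Variables (K : fieldType) (R : comAlgType K) (br : R -> R -> R).
Hypothesis brP : poisson_bracket br.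

Lemma brDl x y z : br (x + y) z = br x z + br y z.
Proof. by case: brP. Qed.

Lemma br_skew x y : br x y = - br y x.
Proof. by case: brP. Qed.

Lemma brMl x y z : br (x * y) z = x * br y z + br x z * y.
Proof. by case: brP. Qed.

Lemma brDr x y z : br z (x + y) = br z x + br z y.
Proof. by rewrite br_skew brDl opprD -!br_skew. Qed.

Lemma brMr x y z : br z (x * y) = x * br z y + br z x * y.
Proof. by rewrite br_skew brMl opprD -mulrN -mulNr -!br_skew. Qed.

Lemma br0l y : br 0 y = 0.
Proof. by apply: (addrI (br 0 y)); rewrite -brDl !addr0. Qed.

Lemma br0r y : br y 0 = 0.
Proof. by rewrite br_skew br0l oppr0. Qed.

Lemma br_suml (I : Type) (s : seq I) (F : I -> R) y :
  br (\sum_(i <- s) F i) y = \sum_(i <- s) br (F i) y.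
Proof. exact: (big_morph (br^~ y) (fun a b => brDl a b y) (br0l y)). Qed.

Lemma br_sumr (I : Type) (s : seq I) (F : I -> R) y :
  br y (\sum_(i <- s) F i) = \sum_(i <- s) br y (F i).
Proof. exact: (big_morph (br y) (fun a b => brDr a b y) (br0r y)). Qed.

Lemma br_sum2 (I E J F : finType) (x : I -> E -> R) (y : J -> F -> R) :
  br (\sum_i \sum_e x i e) (\sum_j \sum_f y j f)
  = \sum_i \sum_e \sum_j \sum_f br (x i e) (y j f).
Proof.
rewrite br_suml; apply: eq_bigr => i _; rewrite br_suml; apply: eq_bigr => e _.
rewrite br_sumr; apply: eq_bigr => j _; exact: br_sumr.
Qed.

Lemma br_mul_mul x y z w : br x z = 0 -> br y w = 0 ->
  br (x * y) (z * w) = x * br y z * w - z * br w x * y.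
Proof.
move=> xz0 yw0.
rewrite brMl !brMr yw0 xz0 (br_skew x w); ring.
Qed.

End PoissonBracket.

Section DeltaSums.
Variable R : pzSemiRingType.

Lemma sum_delta (I : finType) (i0 : I) (F : I -> R) :
  \sum_i (i0 == i)%:R * F i = F i0.
Proof.
rewrite (bigD1 i0) //= eqxx mul1r big1 ?addr0 // => i.
by rewrite eq_sym => /negbTE ->; rewrite mul0r.
Qed.

Lemma sum_delta2 (I J : finType) (i0 : I) (j0 : J) (G : I -> J -> R) :
  \sum_i \sum_j ((i0 == i) && (j0 == j))%:R * G i j = G i0 j0.
Proof.
under eq_bigr => i _ do under eq_bigr => j _ do rewrite -mulnb natrM -mulrA.
under eq_bigr => i _ do rewrite -mulr_sumr sum_delta.
exact: (sum_delta i0 (G^~ j0)).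
Qed.

Lemma sum_ord_delta n (x : nat) (F : nat -> R) :
  \sum_(j < n) (x == j)%:R * F j = (x < n)%N%:R * F x.
Proof.
case: (ltnP x n) => [ltxn | lenx].
  rewrite (bigD1 (Ordinal ltxn)) //= eqxx big1 ?addr0 // => j.
  by rewrite -val_eqE eq_sym /= => /negbTE ->; rewrite mul0r.
rewrite mul0r big1 // => j _.
by rewrite gtn_eqF ?mul0r // (leq_trans (ltn_ord j) lenx).
Qed.

Lemma sum_ord_delta2 m n (x : nat) (e : 'I_m) (G : nat -> 'I_m -> R) :
  \sum_(j < n) \sum_(f < m) ((x == j) && (e == f))%:R * G j f
  = (x < n)%N%:R * G x e.
Proof.
under eq_bigr => j _ do under eq_bigr => f _ do rewrite -mulnb natrM -mulrA.
under eq_bigr => j _ do rewrite -mulr_sumr sum_delta.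
exact: (sum_ord_delta _ _ (G^~ e)).
Qed.

End DeltaSums.

Lemma sum_ord_shift_cond (R : nmodType) (F : nat -> R) r k l : (l <= r)%N ->
  \sum_(i < (r - k).+1 | (i + k < (r - l).+1)%N) F i
  = if (k + l <= r)%N then \sum_(i < (r - (k + l)).+1) F i else 0.
Proof.
move=> le_lr; case: ifP => lekl.
  rewrite (big_ord_widen_cond (r - k).+1 xpredT F); last by lia.
  by apply: eq_bigl => i /=; apply/idP/idP; lia.
by apply: big1 => i; lia.
Qed.

Lemma AopE (R : pzRingType) m r (Q P : nat -> 'M[R]_m) k a b :
  Aop r Q P k a b = \sum_(i < (r - k).+1) \sum_(e < m) Q i a e * P (i + k)%N e b.
Proof. by rewrite summxE; apply: eq_bigr => i _; rewrite mxE. Qed.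

Lemma sum_shift_contract (R : pzRingType) m r (Q P : nat -> 'M[R]_m) k l a d :
  (l <= r)%N ->
  \sum_(i < (r - k).+1) \sum_(e < m) \sum_(j < (r - l).+1) \sum_(f < m)
     (((i + k)%N == j) && (e == f))%:R * (Q i a e * P (j + l)%N f d)
  = if (k + l <= r)%N then Aop r Q P (k + l) a d else 0.
Proof.
move=> le_lr.
under eq_bigr => i _ do under eq_bigr => e _ do
  rewrite (sum_ord_delta2 _ _ _ (fun j f => Q i a e * P (j + l)%N f d)).
under eq_bigr => i _ do rewrite -mulr_sumr mulr_natl mulrb.
rewrite -big_mkcond /= AopE.
rewrite (sum_ord_shift_cond (fun i => \sum_(e < m) Q i a e * P (i + k + l)%N e d)) //.
by case: ifP => // _; apply: eq_bigr => i _; rewrite addnA.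
Qed.

Lemma exchange_big2 (R : nmodType) (I E J F : finType)
    (G : I -> E -> J -> F -> R) :
  \sum_i \sum_e \sum_j \sum_f G i e j f = \sum_j \sum_f \sum_i \sum_e G i e j f.
Proof.
under eq_bigr => i _ do rewrite exchange_big.
rewrite exchange_big; apply: eq_bigr => j _.
under eq_bigr => i _ do rewrite exchange_big.
by rewrite exchange_big.
Qed.

Lemma tcomm_Pi_tens1 (R : pzRingType) m (M : 'M[R]_m) a b c d :
  tcomm (@Pi R m) (tens M 1%:M) a b c d
  = (a == d)%:R * M c b - (b == c)%:R * M a d.
Proof.
rewrite /tcomm /tadd /topp /tmul /tens /Pi.
under eq_bigr => e _ do under eq_bigr => f _ do rewrite andbC (eq_sym e c).
rewrite (sum_delta2 c a (fun e f => M e b * 1%:M f d)).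
under eq_bigr => e _ do under eq_bigr => f _ do
  rewrite mulr_natr -mulr_natl (eq_sym e d).
rewrite (sum_delta2 d b (fun e f => M a e * 1%:M c f)).
by rewrite !mxE (eq_sym c b) !mulr_natr !mulr_natl.
Qed.

Section CanonicalCoordinates.
Variables (K : fieldType) (R : comAlgType K) (br : R -> R -> R).
Variables (m r : nat) (Q P : nat -> 'M[R]_m).
Hypothesis brP : poisson_bracket br.
Hypothesis br_PQ : forall i j, (i <= r)%N -> (j <= r)%N ->
  tbr br (P i) (Q j) = (if i == j then @Pi R m else @tzero R m).
Hypothesis br_PP : forall i j, (i <= r)%N -> (j <= r)%N ->
  tbr br (P i) (P j) = @tzero R m.
Hypothesis br_QQ : forall i j, (i <= r)%N -> (j <= r)%N ->
  tbr br (Q i) (Q j) = @tzero R m.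

Lemma br_PQ_entry u v e b c f : (u <= r)%N -> (v <= r)%N ->
  br (P u e b) (Q v c f) = (b == c)%:R * ((u == v) && (e == f))%:R.
Proof.
move=> le_ur le_vr; have := congr1 (fun T => T e b c f) (br_PQ le_ur le_vr).
rewrite /tbr /Pi /tzero => ->.
by case: (u == v); case: (e == f); case: (b == c); rewrite ?mulr0 ?mulr1.
Qed.

Lemma br_PP_entry u v e b c f : (u <= r)%N -> (v <= r)%N ->
  br (P u e b) (P v c f) = 0.
Proof.
by move=> le_ur le_vr; have := congr1 (fun T => T e b c f) (br_PP le_ur le_vr).
Qed.

Lemma br_QQ_entry u v e b c f : (u <= r)%N -> (v <= r)%N ->
  br (Q u e b) (Q v c f) = 0.
Proof.
by move=> le_ur le_vr; have := congr1 (fun T => T e b c f) (br_QQ le_ur le_vr).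
Qed.

Lemma br_Aop_summands k l (i : 'I_(r - k).+1) (j : 'I_(r - l).+1) a e b c f d :
  (k <= r)%N -> (l <= r)%N ->
  br (Q i a e * P (i + k)%N e b) (Q j c f * P (j + l)%N f d)
  = (b == c)%:R * ((((i + k)%N == j) && (e == f))%:R * (Q i a e * P (j + l)%N f d))
  - (a == d)%:R * ((((j + l)%N == i) && (f == e))%:R * (Q j c f * P (i + k)%N e b)).
Proof.
move=> le_kr le_lr; have lt_i := ltn_ord i; have lt_j := ltn_ord j.
rewrite (br_mul_mul brP); last 2 first.
- by rewrite br_QQ_entry //; lia.
- by rewrite br_PP_entry //; lia.
rewrite !br_PQ_entry; try lia.
by rewrite (eq_sym d a); ring.
Qed.

Lemma br_Aop_entry k l a b c d : (k <= r)%N -> (l <= r)%N ->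
  br (Aop r Q P k a b) (Aop r Q P l c d)
  = if (k + l <= r)%N
    then (b == c)%:R * Aop r Q P (k + l) a d - (a == d)%:R * Aop r Q P (k + l) c b
    else 0.
Proof.
move=> le_kr le_lr.
rewrite [Aop r Q P k a b]AopE [Aop r Q P l c d]AopE (br_sum2 brP).
under eq_bigr => i _ do under eq_bigr => e _ do under eq_bigr => j _ do
  under eq_bigr => f _ do rewrite br_Aop_summands //.
under eq_bigr => i _ do under eq_bigr => e _ do under eq_bigr => j _ do
  rewrite sumrB -!mulr_sumr.
under eq_bigr => i _ do under eq_bigr => e _ do rewrite sumrB -!mulr_sumr.
under eq_bigr => i _ do rewrite sumrB -!mulr_sumr.
rewrite sumrB -!mulr_sumr.
rewrite sum_shift_contract // exchange_big2 sum_shift_contract // (addnC l k).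
by case: ifP; rewrite ?mulr0 ?subrr.
Qed.

End CanonicalCoordinates.

Theorem theorem2p5 (K : fieldType) (R : comAlgType K) (br : R -> R -> R)
  (m r : nat) (Q P : nat -> 'M[R]_m) :
  poisson_bracket br ->
  (forall i j, (i <= r)%N -> (j <= r)%N ->
     tbr br (P i) (Q j) = (if i == j then @Pi R m else @tzero R m)) ->
  (forall i j, (i <= r)%N -> (j <= r)%N -> tbr br (P i) (P j) = @tzero R m) ->
  (forall i j, (i <= r)%N -> (j <= r)%N -> tbr br (Q i) (Q j) = @tzero R m) ->
  forall k l, (k <= r)%N -> (l <= r)%N ->
    tbr br (Aop r Q P k) (Aop r Q P l) =
    (if (k + l <= r)%N
     then topp (tcomm (@Pi R m) (tens (Aop r Q P (k + l)%N) 1%:M))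
     else @tzero R m).
Proof.
move=> brP br_PQ br_PP br_QQ k l le_kr le_lr; apply: tensorP => a b c d.
rewrite /tbr (br_Aop_entry brP br_PQ br_PP br_QQ) //.
by case: ifP => _; rewrite /topp /tzero ?tcomm_Pi_tens1 ?opprB.
Qed.
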